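(* Assume conditions (A1)–(A6). Let $M<\infty$. Then for each $\eta\in\mathcal N_{\mathcal P}$, $\theta\in\mathcal H_{\mathcal P}$ and $\alpha\in\mathcal H$ with $\rho_{\mathcal H}(\alpha)<M$, $$\psi_0(\theta)-\psi_0(\theta_0)=\int\dot\ell_\eta(\theta)(\alpha)(z)\,P_0(dz)+\partial^2_\theta L_0(\theta_0,\eta_0)(\alpha_0-\alpha,\theta-\theta_0)+(I_{\mathrm{lin}}+I_{\mathrm{quad}})\,O(\|\theta-\theta_0\|_{\mathcal H}^2)+O(\|\eta-\eta_0\|_{\mathcal N}\|\theta-\theta_0\|_{\mathcal H})+O(\|\eta-\eta_0\|_{\mathcal N}^2),$$ where each $O(x)$ term is bounded in absolute value by $Kx$ for a constant $K$ depending only on $M$ and the constants appearing in the conditions.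
   Context: Setting: $Z\sim P_0$ on $\mathcal Z$, $P_0$ in a convex nonparametric model $\mathcal P$; $Pf:=\int f\,dP$. $(\mathcal H,\|\cdot\|_{\mathcal H})$, $(\mathcal N,\|\cdot\|_{\mathcal N})$ are normed linear spaces and $\rho_{\mathcal H}$ is an auxiliary norm on $\mathcal H$ with values in $[0,\infty]$. For $\eta\in\mathcal N$, $\ell_\eta:\mathcal Z\times\mathcal H\to\mathbb R$ is a loss and $L_P(\theta,\eta):=E_P[\ell_\eta(Z,\theta)]$. Each $P\in\mathcal P$ has nuisance $\eta_P\in\mathcal N$ and M-estimand $\theta_P:=\arg\min_{\theta\in\mathcal H}L_P(\theta,\eta_P)$. A known $m:\mathcal Z\times\mathcal H\to\mathbb R$ defines $\psi_P(\theta):=E_P[m(Z,\theta)]$ and $\Psi(P):=\psi_P(\theta_P)$. Subscript $0$ denotes evaluation at $P_0$. $\mathcal H_{\mathcal P}:=\mathrm{conv}\{\theta_P:P\in\mathcal P\}$, $\mathcal N_{\mathcal P}:=\mathrm{conv}\{\eta_P:P\in\mathcal P\}$. $\mathcal F^*$ is the dual of a normed space $\mathcal F$; $\overline{\mathcal H}$ is the completion of $\mathcal H$ under $\|\cdot\|_{\mathcal H}$. (A1) For all $P\in\mathcal P$, $\theta_P$ exists and is unique. (A2) $\psi_0:(\mathcal H,\|\cdot\|_{\mathcal H})\to\mathbb R$ is Fréchet differentiable at every $\theta\in\mathcal H_{\mathcal P}$ with derivative $\dot\psi_0(\theta)$, and $\theta\mapsto\dot\psi_0(\theta)$ is Lipschitz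 continuous. (A3) (i) For all $\theta\in\mathcal H_{\mathcal P}$, $\eta\in\mathcal N_{\mathcal P}$ there is a continuous linear $\dot\ell_\eta(\theta):(\mathcal H,\|\cdot\|_{\mathcal H})\to L^2(P_0)$ such that for every $P\in\mathcal P$, $L_P(\cdot,\eta)$ is Fréchet differentiable at $\theta$ with $\partial_\theta L_P(\theta,\eta)(h)=P\,\dot\ell_\eta(\theta)(h)$ for all $h\in\mathcal H$. (ii) For each $\eta\in\mathcal N_{\mathcal P}$, $\theta\mapsto\partial_\theta L_0(\theta,\eta)$ from $(\mathcal H,\|\cdot\|_{\mathcal H})$ into $(\mathcal H,\rho_{\mathcal H})^*$ is Fréchet differentiable at every $\theta\in\mathcal H_{\mathcal P}$ with symmetric derivative $\partial^2_\theta L_0(\theta,\eta)(\cdot,\cdot)$. (iii) There is $C<\infty$ with $|\partial^2_\theta L_0(\theta',\eta')(h_1,h_2)-\partial^2_\theta L_0(\theta,\eta)(h_1,h_2)|\le C(\|\theta'-\theta\|_{\mathcal H}+\|\eta'-\eta\|_{\mathcal N})$ for all $\theta,\theta'\in\mathcal H_{\mathcal P}$, $\eta,\eta'\in\mathcal N_{\mathcal P}$, $h_1,h_2\in\mathcal H$ with $\|h_1\|_{\mathcal H}+\rho_{\mathcal H}(h_2)\le1$. (A4) (i) $\eta\mapsto\partial_\theta L_0(\theta_0,\eta)$ from $(\mathcal N,\|\cdot\|_{\mathcal N})$ into $(\mathcal H,\rho_{\mathcal H})^*$ is Fréchet differentiable at every $\eta\in\mathcal N_{\mathcal P}$ with derivative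 $\partial_\eta\partial_\theta L_0(\theta_0,\eta)(g,h)$. (ii) There is $C<\infty$ with $|\partial_\eta\partial_\theta L_0(\theta_0,\eta)(g,h)-\partial_\eta\partial_\theta L_0(\theta_0,\eta_0)(g,h)|\le C\|\eta-\eta_0\|_{\mathcal N}$ for all $\eta\in\mathcal N_{\mathcal P}$, $h\in\mathcal H$, $g\in\mathcal N$ with $\|g\|_{\mathcal N}+\rho_{\mathcal H}(h)\le1$. (A5) $\partial_\eta\partial_\theta L_0(\theta_0,\eta_0)(g,h)=0$ for all $(g,h)\in\mathcal N\times\mathcal H$. (A6) There are $0<\kappa_1,\kappa_2<\infty$ with $\kappa_1\|h\|_{\mathcal H}^2\le\partial^2_\theta L_0(\theta_0,\eta_0)(h,h)\le\kappa_2\|h\|_{\mathcal H}^2$ for all $h\in\mathcal H$. Hessian Riesz representer: $\alpha_0\in\overline{\mathcal H}$ is the unique element with $\dot\psi_0(\theta_0)(h)=\partial^2_\theta L_0(\theta_0,\eta_0)(\alpha_0,h)$ for all $h\in\overline{\mathcal H}$ (forms extended by continuity). $I_{\mathrm{lin}}:=0$ if $\psi_0$ is linear with $\psi_0=\dot\psi_0(\theta_0)$, and $1$ otherwise; $I_{\mathrm{quad}}:=0$ if $L_0(\theta,\eta_0)-L_0(\theta_0,\eta_0)=\partial_\theta L_0(\theta_0,\eta_0)(\theta-\theta_0)+\tfrac12\partial^2_\theta L_0(\theta_0,\eta_0)(\theta-\theta_0,\theta-\theta_0)$ for all $\theta$, and $1$ otherwise. *)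

From HB Require Import structures.
From mathcomp Require Import all_boot all_order all_algebra.
From mathcomp Require Import all_classical all_reals all_analysis.
Set Implicit Arguments. Unset Strict Implicit. Unset Printing Implicit Defensive.
Import Order.TTheory GRing.Theory Num.Theory.
Import numFieldNormedType.Exports.
Local Open Scope classical_set_scope.
Local Open Scope ring_scope.

Section Defs.
Context {R : realType}.

Definition convhull (V : lmodType R) (A : set V) : set V :=
  [set x | exists n (w : 'I_n -> R) (a : 'I_n -> V),
     [/\ forall i, 0 <= w i, \sum_(i < n) w i = 1,
         forall i, A (a i) & x = \sum_(i < n) w i *: a i]].

Definition ext_norm (V : lmodType R) (rho : V -> \bar R) : Prop :=
  [/\ forall v, (0 <= rho v)%E,
      forall v, rho v = 0%E -> v = 0,
      forall (a : R) v, rho (a *: v) = (`|a|%:E * rho v)%E &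
      forall u v : V, (rho (u + v)%R <= rho u + rho v)%E].

Definition in_rho_dual (V : lmodType R) (rho : V -> \bar R) (f : V -> R) : Prop :=
  (forall (a : R) u v, f (a *: u + v) = a * f u + f v) /\
  exists c : R, forall v, (rho v <= 1)%E -> `|f v| <= c.

(* Frechet differentiability, relative to the set S (the domain of F),
   of F : U -> (V, rho)^* at x, with derivative D : U -> (V, rho)^*
   (a continuous linear map from (U, |.|) into (V, rho)^* with its dual norm). *)
Definition rel_frechet (U : normedModType R) (V : lmodType R)
  (rho : V -> \bar R) (S : set U) (F : U -> V -> R) (x : U) (D : U -> V -> R) : Prop :=
  [/\ forall (a : R) k1 k2 v, D (a *: k1 + k2) v = a * D k1 v + D k2 v,
      forall k, in_rho_dual rho (D k),
      exists c : R, forall k v, (rho v <= 1)%E -> `|D k v| <= c * `|k| &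
      forall e : R, 0 < e -> exists2 del : R, 0 < del &
        forall y, S y -> `|y - x| < del -> forall v, (rho v <= 1)%E ->
          `|F y v - F x v - D (y - x) v| <= e * `|y - x| ].

Definition ind01 (P : Prop) : R := if `[< P >] then 0 else 1.

End Defs.

(* Write h = theta - theta0, k = eta - eta0, and rescale alpha to a = alpha / (2M), so that
   rho a <= 1/2.  The Riesz identity for alpha0 turns the left-hand side into
     [psi0 theta - psi0 theta0 - dpsi0(theta0) h] + [d2L0(h, alpha) - dL(theta, eta)(alpha)].
   The first bracket is a first-order Taylor remainder, of size |Lpsi| |h|^2 by the Lipschitz
   derivative of psi0, and zero when psi0 is linear.  For the second, theta0 minimizes
   L_P0(., eta0), so dL(theta0, eta0) = 0; then dL(theta, eta)(a) - d2L0(h, a) splits into a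
   Taylor remainder in theta, a change of eta inside the Hessian, and an increment in eta whose
   derivative vanishes at eta0 by Neyman orthogonality (A5).  Each piece is bounded by a mean
   value inequality along a segment of the convex hulls H_P, N_P, using the Lipschitz bounds
   (A3)(iii), (A4)(ii).  If the loss is exactly quadratic, dL(theta, eta0) = d2L0(h, .), and the
   theta-remainder is replaced by a mixed term of order |h| |k|. *)

From HB Require Import structures.
From mathcomp Require Import all_boot all_order all_algebra.
From mathcomp Require Import all_classical all_reals all_analysis.
From mathcomp Require Import ring lra.
Import Order.TTheory GRing.Theory Num.Theory.
Import numFieldNormedType.Exports.
Set Implicit Arguments. Unset Strict Implicit. Unset Printing Implicit Defensive.
Local Open Scope classical_set_scope.
Local Open Scope ring_scope.

Section linear_forms.
Context {R : realType} {V : lmodType R}.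

Definition linear_form (f : V -> R) := forall (a : R) u v, f (a *: u + v) = a * f u + f v.

Lemma linear_form0 f : linear_form f -> f 0 = 0.
Proof. by move=> lf; have := lf 1 0 0; rewrite scale1r addr0 mul1r; lra. Qed.

Lemma linear_formZ f : linear_form f -> forall (a : R) u, f (a *: u) = a * f u.
Proof. by move=> lf a u; have := lf a u 0; rewrite !addr0 (linear_form0 lf) addr0. Qed.

End linear_forms.

Section mean_value_inequality.
Context {R : realType}.
Implicit Types f g : R -> R.

Lemma dist01_le_of_locally_lipschitz f (B : R) :
  (forall t, 0 <= t <= 1 -> exists2 del, 0 < del &
     forall s, 0 <= s <= 1 -> `|s - t| < del -> `|f s - f t| <= B * `|s - t|) ->
  `|f 1 - f 0| <= B.
Proof.
move=> loc.
(* The supremum T of the good initial segments is attained, and cannot be < 1 since f is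
   locally Lipschitz at T. *)
pose S := [set t : R | 0 <= t <= 1 /\ forall s, 0 <= s <= t -> `|f s - f 0| <= B * s].
have S0 : S 0.
  split=> [|s /andP[s0 s0']]; first by rewrite lexx ler01.
  by rewrite (@le_anti _ _ s 0) ?s0 ?s0' // subrr normr0 mulr0.
have supS : has_sup S by split; [exists 0 | exists 1 => t [/andP[]]].
set T := sup S.
have T0 : 0 <= T := sup_upper_bound supS S0.
have T1 : T <= 1 by apply: ge_sup; [exists 0 | move=> t [/andP[]]].
have [del del0 locT] := loc T (introT andP (conj T0 T1)).
have below s : 0 <= s -> s < T -> `|f s - f 0| <= B * s.
  move=> s0 sT; have [|x [_ Sx] ltx] := @sup_adherent _ S (T - s) _ supS.
    by rewrite subr_gt0.
  by apply: Sx; rewrite s0 /=; rewrite -/T in ltx; lra.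
have atT : `|f T - f 0| <= B * T.
  have [x [x01 Sx] ltx] := sup_adherent del0 supS; rewrite -/T in ltx.
  have xT : x <= T := sup_upper_bound supS (conj x01 Sx).
  have fx : `|f x - f 0| <= B * x by apply: Sx; rewrite lexx andbT; case/andP: x01.
  have dxT : `|x - T| = T - x by rewrite distrC ger0_norm // subr_ge0.
  have := locT x x01; rewrite dxT => /(_ ltac:(lra)); rewrite distrC => fTx.
  by apply: le_trans (ler_distD (f x) _ _) _; lra.
have T_eq1 : T = 1.
  apply/eqP; rewrite eq_le T1 leNgt; apply/negP => T_lt1.
  pose t := Num.min (T + del / 2) 1.
  have tT : T < t by rewrite lt_min T_lt1 andbT; lra.
  have t1 : t <= 1 by rewrite ge_min lexx orbT.
  have St : S t.
    split=> [|s /andP[s0 st]]; first by rewrite t1 andbT; lra.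
    case: (ltgtP s T) => [sT | Ts | ->]; [exact: below | | exact: atT].
    have s01 : 0 <= s <= 1 by rewrite s0 (le_trans st t1).
    have ts : t <= T + del / 2 by rewrite ge_min lexx.
    have dsT : `|s - T| = s - T by rewrite ger0_norm // subr_ge0 ltW.
    have := locT s s01; rewrite dsT => /(_ ltac:(lra)) fsT.
    by apply: le_trans (ler_distD (f T) _ _) _; lra.
  by have := sup_upper_bound supS St; rewrite -/T; lra.
by move: atT; rewrite T_eq1 mulr1.
Qed.

Lemma divDr1_mul_le (e x : R) : 0 <= e -> 0 <= x -> e / (x + 1) * x <= e.
Proof. by move=> e0 x0; rewrite mulrAC ler_pdivrMr ?ltr_wpDl //; lra. Qed.

Lemma divDr1_mul_lt (e x : R) : 0 < e -> 0 <= x -> e / (x + 1) * x < e.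
Proof. by move=> e0 x0; rewrite mulrAC ltr_pdivrMr ?ltr_wpDl //; lra. Qed.

Lemma ler_mul_norml (c a b : R) : 0 <= a -> a <= b -> c * a <= `|c| * b.
Proof.
move=> a0 ab; apply: (@le_trans _ _ (`|c| * a)); last by rewrite ler_wpM2l.
by rewrite ler_wpM2r // real_ler_norm // num_real.
Qed.

Lemma ind01_ge0 (P : Prop) : 0 <= ind01 P :> R.
Proof. by rewrite /ind01; case: asboolP. Qed.

Lemma ler_ind01 (P : Prop) (u c b : R) : (P -> u <= b) -> u <= c + b -> u <= ind01 P * c + b.
Proof. by rewrite /ind01; case: asboolP => [p /(_ p) ub _|_ _]; rewrite ?mul0r ?add0r ?mul1r. Qed.

Lemma dist01_le_of_derivative_bound f g (A : R) :
  (forall t, 0 <= t <= 1 -> forall e, 0 < e -> exists2 del, 0 < del &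
     forall s, 0 <= s <= 1 -> `|s - t| < del ->
       `|f s - f t - g t * (s - t)| <= e * `|s - t|) ->
  (forall t, 0 <= t <= 1 -> `|g t| <= A) -> `|f 1 - f 0| <= A.
Proof.
move=> df gA; apply/ler_addgt0Pr => e e0.
apply: dist01_le_of_locally_lipschitz => t t01.
have [del del0 dft] := df t t01 e e0; exists del => // s s01 st.
have gst : `|g t * (s - t)| <= A * `|s - t| by rewrite normrM ler_wpM2r ?gA.
have := ler_normD (f s - f t - g t * (s - t)) (g t * (s - t)); rewrite subrK.
by have := dft s s01 st; lra.
Qed.

End mean_value_inequality.

Section directional_frechet.
Context {R : realType} {U : normedModType R}.
Implicit Types (S : set U) (F : U -> R) (x y v : U).

Definition fderiv_within S F x (D : U -> R) :=
  (forall (a : R) v, D (a *: v) = a * D v) /\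
  forall e : R, 0 < e -> exists2 del : R, 0 < del &
    forall y, S y -> `|y - x| < del -> `|F y - F x - D (y - x)| <= e * `|y - x|.

Lemma fderiv_withinB S F1 F2 x D1 D2 :
  fderiv_within S F1 x D1 -> fderiv_within S F2 x D2 ->
  fderiv_within S (fun y => F1 y - F2 y) x (fun v => D1 v - D2 v).
Proof.
move=> [D1Z dF1] [D2Z dF2]; split=> [a v|e e0]; first by rewrite D1Z D2Z mulrBr.
have e2 : 0 < e / 2 by rewrite divr_gt0.
have [d1 d10 approx1] := dF1 _ e2; have [d2 d20 approx2] := dF2 _ e2.
exists (Num.min d1 d2) => [|y Sy]; first by rewrite lt_min d10 d20.
rewrite lt_min => /andP[yd1 yd2].
have := ler_normB (F1 y - F1 x - D1 (y - x)) (F2 y - F2 x - D2 (y - x)).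
have -> : F1 y - F1 x - D1 (y - x) - (F2 y - F2 x - D2 (y - x))
        = F1 y - F2 y - (F1 x - F2 x) - (D1 (y - x) - D2 (y - x)) by ring.
by have := approx1 y Sy yd1; have := approx2 y Sy yd2; lra.
Qed.

Lemma is_diff_fderiv_within S F x (dF : U -> R) :
  is_diff x F dF -> fderiv_within S F x dF.
Proof.
move=> [Fdiff <-]; split=> [a v|e e0]; first by rewrite linearZ.
have /eqaddoP /(_ e e0) /nbhs_norm0P [del del0 approx] := diff_locally Fdiff.
exists del => // y _ /approx; rewrite !fctE /= subrK.
by rewrite opprD addrA.
Qed.

Lemma rel_frechet_fderiv_within (V : lmodType R) (rho : V -> \bar R) S
    (F : U -> V -> R) x (D : U -> V -> R) w :
  rel_frechet rho S F x D -> (rho w <= 1)%E ->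
  fderiv_within S (F^~ w) x (D^~ w).
Proof.
move=> [DD _ _ dF] rhow; split=> [a v|e e0].
  exact: (linear_formZ (f := D^~ w) (fun a u v => DD a u v w)).
have [del del0 approx] := dF e e0; exists del => // y Sy yx; exact: approx.
Qed.

Lemma normr_segment_le x y (t : R) : 0 <= t <= 1 -> `|x + t *: (y - x) - x| <= `|y - x|.
Proof. by case/andP=> t0 t1; rewrite addrC addKr normrZ ger0_norm // ler_piMl. Qed.

Lemma fderiv_within_segment_bound S F (D : U -> U -> R) x y (c A : R) :
  (forall t, 0 <= t <= 1 -> S (x + t *: (y - x))) ->
  (forall t, 0 <= t <= 1 -> fderiv_within S F (x + t *: (y - x)) (D (x + t *: (y - x)))) ->
  (forall t, 0 <= t <= 1 -> `|D (x + t *: (y - x)) (y - x) - c| <= A) ->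
  `|F y - F x - c| <= A.
Proof.
move=> segS dF DA; set h := y - x.
have := @dist01_le_of_derivative_bound _
  (fun t => F (x + t *: h) - t * c) (fun t => D (x + t *: h) h - c) A.
have -> : x + 1 *: h = y by rewrite scale1r addrC subrK.
rewrite scale0r addr0 mul1r mul0r subr0.
have -> : F y - c - F x = F y - F x - c by ring.
apply=> // t t01 e e0.
have [DZ approx] := dF t t01.
have h1 : 0 < `|h| + 1 by rewrite ltr_wpDl.
have [del del0 approx_t] := approx _ (divr_gt0 e0 h1).
exists (del / (`|h| + 1)) => [|s s01]; first by rewrite divr_gt0.
rewrite ltr_pdivlMr // => st.
have pst : x + s *: h - (x + t *: h) = (s - t) *: h.
  by rewrite scalerBl opprD addrACA subrr add0r.
have sth : `|s - t| * `|h| < del.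
  by apply: le_lt_trans st; rewrite ler_wpM2l // lerDl.
have := approx_t _ (segS s s01); rewrite pst normrZ DZ => /(_ sth).
have -> : F (x + s *: h) - s * c - (F (x + t *: h) - t * c) - (D (x + t *: h) h - c) * (s - t)
    = F (x + s *: h) - F (x + t *: h) - (s - t) * D (x + t *: h) h by ring.
move/le_trans; apply; rewrite mulrA mulrAC ler_wpM2r //.
exact/divDr1_mul_le/normr_ge0/ltW.
Qed.

Lemma fderiv_within_lipschitz_taylor S F (D : U -> U -> R) (Lip : R) x y :
  (forall t, 0 <= t <= 1 -> S (x + t *: (y - x))) ->
  (forall z, S z -> fderiv_within S F z (D z)) ->
  (forall z, S z -> forall v, `|D z v - D x v| <= Lip * `|z - x| * `|v|) ->
  `|F y - F x - D x (y - x)| <= `|Lip| * `|y - x| ^+ 2.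
Proof.
move=> segS dF Dlip.
apply: (fderiv_within_segment_bound segS) => [t t01|t t01]; first exact: dF (segS t t01).
apply: le_trans (Dlip _ (segS t t01) _) _; case/andP: t01 => t0 t1.
rewrite addrC addKr normrZ ger0_norm // expr2 mulrA ler_wpM2r //.
by rewrite ler_mul_norml ?mulr_ge0 // ler_piMl.
Qed.

Lemma is_diff_lipschitz_taylor (P : Prop) S F (dF : U -> U -> R) (Lip : R) x y :
  (forall t, 0 <= t <= 1 -> S (x + t *: (y - x))) -> S x ->
  (forall z, S z -> is_diff z F (dF z)) ->
  (forall z z', S z -> S z' -> forall v, `|dF z' v - dF z v| <= Lip * `|z' - z| * `|v|) ->
  (P -> forall z, F z = dF x z) ->
  `|F y - F x - dF x (y - x)| <= ind01 P * (`|Lip| * `|y - x| ^+ 2).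
Proof.
move=> segS Sx Fdiff Flip Flin; rewrite -[leRHS]addr0; apply: ler_ind01 => [/Flin FE|].
  by rewrite !FE; have [_ <-] := Fdiff x Sx; rewrite linearB /= subrr normr0.
rewrite addr0; apply: fderiv_within_lipschitz_taylor segS _ (fun z Sz => Flip x z Sx Sz).
by move=> z Sz; apply/is_diff_fderiv_within/Fdiff.
Qed.

Lemma fderiv_within_line F x D v (e : R) : fderiv_within setT F x D -> 0 < e ->
  exists t, [/\ 0 < t, t <= e & `|F (x + t *: v) - F x - t * D v| <= e * t].
Proof.
move=> [DZ approx] e0; have v1 : 0 < `|v| + 1 by rewrite ltr_wpDl.
have [del del0 approx_x] := approx _ (divr_gt0 e0 v1).
pose t := Num.min e (del / (`|v| + 1)).
have t0 : 0 < t by rewrite lt_min e0 divr_gt0.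
have tdel : t <= del / (`|v| + 1) by rewrite ge_min lexx orbT.
exists t; split => //; first by rewrite ge_min lexx.
have xtv : x + t *: v - x = t *: v by rewrite addrC addKr.
have tv_del : t * `|v| < del.
  apply: le_lt_trans (divDr1_mul_lt del0 (normr_ge0 v)).
  by rewrite ler_wpM2r.
have := approx_x (x + t *: v) I; rewrite xtv normrZ gtr0_norm // DZ => /(_ tv_del).
move/le_trans; apply; rewrite mulrA mulrAC ler_wpM2r ?(ltW t0) //.
exact/divDr1_mul_le/normr_ge0/ltW.
Qed.

Lemma fderiv_eq0_at_min F x D : fderiv_within setT F x D ->
  (forall y, F x <= F y) -> forall v, D v = 0.
Proof.
move=> dF Fmin.
suff D_ge0 v : 0 <= D v.
  by move=> v; apply/eqP; rewrite eq_le D_ge0 andbT -oppr_ge0 -mulN1r -dF.1.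
apply/ler_addgt0Pr => e e0.
have [t [t0 _]] := fderiv_within_line v dF e0.
rewrite ler_norml => /andP[_ up]; have := Fmin (x + t *: v).
rewrite -(pmulr_rge0 _ t0); lra.
Qed.

Lemma fderiv_within_line_quadratic F x D v (c q : R) : fderiv_within setT F x D ->
  (forall t, F (x + t *: v) - F x = t * c + t ^+ 2 * q) -> D v = c.
Proof.
move=> dF Fq; apply/eqP; rewrite -subr_eq0 -normr_le0; apply/ler_addgt0Pr => e e0.
have q1 : 0 < `|q| + 1 by rewrite ltr_wpDl.
set e' := e / (`|q| + 1); have e'E : e' * (`|q| + 1) = e by rewrite divfK ?gt_eqF.
have [t [t0 te approx]] := fderiv_within_line v dF (divr_gt0 e0 q1 : 0 < e').
rewrite Fq in approx.
have tq : t * (t * `|q|) <= e' * (t * `|q|) by rewrite ler_wpM2r // mulr_ge0 // ltW.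
have tri : `|t * (D v - c)| <= `|t * c + t ^+ 2 * q - t * D v| + t ^+ 2 * `|q|.
  have -> : t * (D v - c) = t ^+ 2 * q - (t * c + t ^+ 2 * q - t * D v) by ring.
  by apply: le_trans (ler_normB _ _) _; rewrite normrM ger0_norm ?sqr_ge0 // addrC.
rewrite normrM gtr0_norm // expr2 in tri.
by rewrite add0r -(ler_pM2l t0) -e'E; lra.
Qed.

Lemma quadratic_fderiv F x0 x (D0 : U -> R) (B : U -> U -> R) D :
  linear_form D0 -> (forall (a : R) u v w, B (a *: u + v) w = a * B u w + B v w) ->
  (forall u w, B u w = B w u) ->
  (forall y, F y - F x0 = D0 (y - x0) + 2^-1 * B (y - x0) (y - x0)) ->
  fderiv_within setT F x D -> forall v, D v = D0 v + B (x - x0) v.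
Proof.
move=> D0lin Blin Bsym Fq dF v.
apply: fderiv_within_line_quadratic (2^-1 * B v v) dF _ => t.
have -> : F (x + t *: v) - F x = (F (x + t *: v) - F x0) - (F x - F x0) by ring.
rewrite !Fq.
have -> : x + t *: v - x0 = t *: v + (x - x0) by rewrite addrAC addrC.
set h := x - x0; rewrite D0lin Blin (Bsym v) Blin (Bsym h (_ + h)) Blin (Bsym v h).
lra.
Qed.

Lemma homogeneous_bound (G : U -> R) (c : R) :
  (forall (a : R) v, G (a *: v) = a * G v) ->
  (forall u, `|u| <= 2^-1 -> `|G u| <= c) -> forall v, `|G v| <= 2 * c * `|v|.
Proof.
move=> GZ Gc v; have [->|v0] := eqVneq v 0.
  by rewrite -[X in G X](scale0r (0 : U)) GZ mul0r !normr0 mulr0.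
have nv : 0 < `|v| by rewrite normr_gt0.
set u := (2 * `|v|)^-1 *: v.
have vE : v = (2 * `|v|) *: u by rewrite /u scalerA divff ?scale1r // gt_eqF ?mulr_gt0.
have nu : `|u| = 2^-1.
  by rewrite /u normrZ ger0_norm ?invr_ge0 ?mulr_ge0 // invfM -mulrA mulVf ?mulr1 ?gt_eqF.
rewrite {1}vE GZ normrM ger0_norm ?mulr_ge0 // [leRHS]mulrAC ler_wpM2l ?mulr_ge0 //.
by rewrite Gc // nu.
Qed.

End directional_frechet.

Section convex_hull.
Context {R : realType} {V : lmodType R}.
Implicit Types (A : set V) (x y : V).

Lemma convhull_sub A : A `<=` convhull A.
Proof.
move=> a Aa; exists 1%N, (fun=> 1), (fun=> a).
by split=> [i|||]; rewrite ?ler01 ?big_ord1 ?scale1r.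
Qed.

Lemma convhull_segment A x y (t : R) :
  convhull A x -> convhull A y -> 0 <= t <= 1 -> convhull A (x + t *: (y - x)).
Proof.
move=> [n [w [a [w0 w1 Aa ->]]]] [m [v [b [v0 v1 Ab ->]]]] /andP[t0 t1].
pose c i := match fintype.split i with inl j => (1 - t) * w j | inr j => t * v j end.
pose d i := match fintype.split i with inl j => a j | inr j => b j end.
have cl j : c (lshift m j) = (1 - t) * w j by rewrite /c (unsplitK (inl j : 'I_n + 'I_m)).
have cr j : c (rshift n j) = t * v j by rewrite /c (unsplitK (inr j : 'I_n + 'I_m)).
have dl j : d (lshift m j) = a j by rewrite /d (unsplitK (inl j : 'I_n + 'I_m)).
have dr j : d (rshift n j) = b j by rewrite /d (unsplitK (inr j : 'I_n + 'I_m)).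
exists (n + m)%N, c, d; split.
- by move=> i; rewrite /c; case: fintype.split => j; apply: mulr_ge0 => //; lra.
- rewrite big_split_ord /=.
  under eq_bigr do rewrite cl.
  under [X in _ + X]eq_bigr do rewrite cr.
  by rewrite -!mulr_sumr w1 v1 !mulr1 subrK.
- by move=> i; rewrite /d; case: fintype.split.
- apply/esym; rewrite big_split_ord /=.
  under eq_bigr do rewrite cl dl -scalerA.
  under [X in _ + X]eq_bigr do rewrite cr dr -scalerA.
  rewrite -!scaler_sumr scalerBl scale1r scalerBr.
  by rewrite addrCA [in RHS]addrC -!addrA; congr (_ + _); rewrite addrC.
Qed.

End convex_hull.

Lemma ext_norm_lt_gt0 {R : realType} (V : lmodType R) (rho : V -> \bar R) v (M : R) :
  ext_norm rho -> (rho v < M%:E)%E -> 0 < M.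
Proof. by case=> rho_ge0 _ _ _ rvM; rewrite -lte_fin (le_lt_trans (rho_ge0 v)). Qed.

Section score_remainder.
Context {R : realType} {H N : normedModType R}.
Variables (rho : H -> \bar R) (HP : set H) (NP : set N) (theta0 : H) (eta0 : N).
Variables (dL : H -> N -> H -> R) (d2L : H -> N -> H -> H -> R) (dEta : N -> N -> H -> R).
Variables (C3 C4 : R).
Hypothesis HP_segment :
  forall x y t, HP x -> HP y -> 0 <= t <= 1 -> HP (x + t *: (y - x)).
Hypothesis NP_segment :
  forall x y t, NP x -> NP y -> 0 <= t <= 1 -> NP (x + t *: (y - x)).
Hypotheses (HP0 : HP theta0) (NP0 : NP eta0).
Hypothesis dL_frechet_theta : forall et th, NP et -> HP th ->
  [/\ in_rho_dual rho (dL th et), rel_frechet rho HP (dL^~ et) th (d2L th et)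
     & forall h1 h2, d2L th et h1 h2 = d2L th et h2 h1].
Hypothesis d2L_lipschitz : forall th th' et et' h1 h2, HP th -> HP th' -> NP et -> NP et' ->
  (`|h1|%:E + rho h2 <= 1)%E ->
  `|d2L th' et' h1 h2 - d2L th et h1 h2| <= C3 * (`|th' - th| + `|et' - et|).
Hypothesis dL_eta : forall et, NP et -> rel_frechet rho NP (dL theta0) et (dEta et).
Hypothesis dEta_lipschitz : forall et g h, NP et -> (`|g|%:E + rho h <= 1)%E ->
  `|dEta et g h - dEta eta0 g h| <= C4 * `|et - eta0|.
Hypothesis dEta0 : forall g h, dEta eta0 g h = 0.
Hypothesis dL0 : forall v, dL theta0 eta0 v = 0.
Hypothesis rho_norm : ext_norm rho.

Let dL_theta et th : NP et -> HP th -> rel_frechet rho HP (dL^~ et) th (d2L th et).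
Proof. by move=> Net Hth; case: (dL_frechet_theta Net Hth). Qed.

Section direction.
Variable a : H.
(* Leaves room for all test vectors u with |u| <= 1/2 in the constraint |u| + rho a <= 1. *)
Hypothesis rho_a : (rho a <= (2^-1)%:E)%E.

Let rho_a_le1 : (rho a <= 1)%E.
Proof. by apply: le_trans rho_a _; rewrite lee_fin invf_le1 ?ler1n. Qed.

Let ball_half (V : normedModType R) (u : V) : `|u| <= 2^-1 -> (`|u|%:E + rho a <= 1)%E.
Proof.
move: rho_a; case: (rho a) => [r||] //= ra ua; last by rewrite addeNy leNye.
by rewrite -EFinD lee_fin; move: ra; rewrite lee_fin; lra.
Qed.

Lemma d2L_sub_bound th th' et et' : HP th -> HP th' -> NP et -> NP et' -> forall u,
  `|d2L th' et' u a - d2L th et u a| <= 2 * `|C3| * (`|th' - th| + `|et' - et|) * `|u|.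
Proof.
move=> Hth Hth' Net Net'; rewrite -mulrA; apply: homogeneous_bound => [b u|u uh].
  have [D _ _ _] := dL_theta Net' Hth'; have [D' _ _ _] := dL_theta Net Hth.
  rewrite (linear_formZ (f := d2L th' et'^~ a) (fun b u v => D b u v a) b u).
  by rewrite (linear_formZ (f := d2L th et^~ a) (fun b u v => D' b u v a) b u) mulrBr.
apply: le_trans (d2L_lipschitz Hth Hth' Net Net' (ball_half uh)) _.
by rewrite ler_mul_norml ?addr_ge0.
Qed.

Lemma dEta_bound et : NP et -> forall g, `|dEta et g a| <= 2 * `|C4| * `|et - eta0| * `|g|.
Proof.
move=> Net; rewrite -mulrA; apply: homogeneous_bound => [b g|g gh].
  have [D _ _ _] := dL_eta Net; exact: (linear_formZ (f := dEta et^~ a) (fun b u v => D b u v a)).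
rewrite -[dEta et g a]subr0 -(dEta0 g a).
by apply: le_trans (dEta_lipschitz Net (ball_half gh)) _; rewrite ler_mul_norml.
Qed.

Lemma dL_taylor_theta th et : HP th -> NP et ->
  `|dL th et a - dL theta0 et a - d2L theta0 et (th - theta0) a|
    <= 2 * `|C3| * `|th - theta0| ^+ 2.
Proof.
move=> Hth Net; have segH t : 0 <= t <= 1 -> HP (theta0 + t *: (th - theta0)).
  exact: HP_segment.
apply: (fderiv_within_segment_bound (F := dL^~ et^~ a) (D := fun y u => d2L y et u a)
  segH) => t t01.
  exact: rel_frechet_fderiv_within (dL_theta Net (segH t t01)) rho_a_le1.
apply: le_trans (d2L_sub_bound HP0 (segH t t01) Net Net _) _.
rewrite subrr normr0 addr0 expr2 mulrA ler_wpM2r // ler_wpM2l ?mulr_ge0 //.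
exact: normr_segment_le.
Qed.

Lemma dL_taylor_eta et : NP et ->
  `|dL theta0 et a - dL theta0 eta0 a| <= 2 * `|C4| * `|et - eta0| ^+ 2.
Proof.
move=> Net; have segN t : 0 <= t <= 1 -> NP (eta0 + t *: (et - eta0)).
  exact: NP_segment.
rewrite -[X in `|X|]subr0.
apply: (fderiv_within_segment_bound (F := dL theta0^~ a) (D := fun e g => dEta e g a)
  segN) => t t01.
  exact: rel_frechet_fderiv_within (dL_eta (segN t t01)) rho_a_le1.
rewrite subr0; apply: le_trans (dEta_bound (segN t t01) _) _.
rewrite expr2 mulrA ler_wpM2r // ler_wpM2l ?mulr_ge0 //.
exact: normr_segment_le.
Qed.

Lemma dL_mixed_bound th et : HP th -> NP et ->
  `|dL th et a - dL th eta0 a - (dL theta0 et a - dL theta0 eta0 a)|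
    <= 2 * `|C3| * `|et - eta0| * `|th - theta0|.
Proof.
move=> Hth Net; have segH t : 0 <= t <= 1 -> HP (theta0 + t *: (th - theta0)).
  exact: HP_segment.
rewrite -[X in `|X|]subr0.
apply: (fderiv_within_segment_bound (F := fun y => dL y et a - dL y eta0 a)
  (D := fun y u => d2L y et u a - d2L y eta0 u a) segH) => t t01.
  exact: fderiv_withinB (rel_frechet_fderiv_within (dL_theta Net (segH t t01)) rho_a_le1)
                        (rel_frechet_fderiv_within (dL_theta NP0 (segH t t01)) rho_a_le1).
rewrite subr0; apply: le_trans (d2L_sub_bound (segH t t01) (segH t t01) NP0 Net _) _.
by rewrite subrr normr0 add0r.
Qed.

Lemma score_remainder_bound th et : HP th -> NP et ->
  `|d2L theta0 eta0 (th - theta0) a - dL th et a|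
    <= 2 * `|C3| * `|th - theta0| ^+ 2
       + (2 * `|C3| * `|et - eta0| * `|th - theta0| + 2 * `|C4| * `|et - eta0| ^+ 2).
Proof.
move=> Hth Net; set h := th - theta0.
have d2L_eta := d2L_sub_bound HP0 HP0 NP0 Net h; rewrite subrr normr0 add0r in d2L_eta.
have -> : d2L theta0 eta0 h a - dL th et a =
  - ((dL th et a - dL theta0 et a - d2L theta0 et h a)
     + (d2L theta0 et h a - d2L theta0 eta0 h a)
     + (dL theta0 et a - dL theta0 eta0 a)) by rewrite dL0; ring.
rewrite normrN; apply: le_trans (ler_normD _ _) _.
have := ler_normD (dL th et a - dL theta0 et a - d2L theta0 et h a)
                  (d2L theta0 et h a - d2L theta0 eta0 h a).
by have := dL_taylor_theta Hth Net; have := dL_taylor_eta Net; lra.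
Qed.

Lemma score_remainder_bound_quadratic th et : HP th -> NP et ->
  (forall v, dL th eta0 v = d2L theta0 eta0 (th - theta0) v) ->
  `|d2L theta0 eta0 (th - theta0) a - dL th et a|
    <= 2 * `|C3| * `|et - eta0| * `|th - theta0| + 2 * `|C4| * `|et - eta0| ^+ 2.
Proof.
move=> Hth Net dLq; rewrite -dLq.
have -> : dL th eta0 a - dL th et a =
  - ((dL th et a - dL th eta0 a - (dL theta0 et a - dL theta0 eta0 a))
     + (dL theta0 et a - dL theta0 eta0 a)) by rewrite dL0; ring.
rewrite normrN; apply: le_trans (ler_normD _ _) _.
exact: lerD (dL_mixed_bound Hth Net) (dL_taylor_eta Net).
Qed.

End direction.

Lemma score_remainder_scaled (P : Prop) (M : R) th et alpha :
  HP th -> NP et -> (rho alpha < M%:E)%E ->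
  (P -> forall v, dL th eta0 v = d2L theta0 eta0 (th - theta0) v) ->
  `|d2L theta0 eta0 (th - theta0) alpha - dL th et alpha|
    <= 2 * M * (ind01 P * (2 * `|C3| * `|th - theta0| ^+ 2)
       + (2 * `|C3| * `|et - eta0| * `|th - theta0| + 2 * `|C4| * `|et - eta0| ^+ 2)).
Proof.
move=> Hth Net rho_alpha quad; have [rho_ge0 _ rhoZ _] := rho_norm.
have M0 := ext_norm_lt_gt0 rho_norm rho_alpha.
pose a := (2 * M)^-1 *: alpha.
have alphaE : alpha = (2 * M) *: a by rewrite /a scalerA divff ?scale1r // gt_eqF ?mulr_gt0.
have rho_a : (rho a <= (2^-1)%:E)%E.
  rewrite /a rhoZ gtr0_norm ?invr_gt0 ?mulr_gt0 //.
  move: rho_alpha (rho_ge0 alpha); case: (rho alpha) => [r||] //=; rewrite lte_fin => rM _.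
  by rewrite -EFinM lee_fin invfM -mulrA ler_piMr // mulrC ler_pdivrMr // mul1r ltW.
have [[dL_lin _] _ _] := dL_frechet_theta Net Hth.
have [_ d2L0_dual _ _] := dL_theta NP0 HP0.
rewrite alphaE (linear_formZ dL_lin) (linear_formZ (d2L0_dual _).1) -mulrBr.
have M2 : 0 <= 2 * M by rewrite mulr_ge0 // ltW.
rewrite normrM ger0_norm // ler_wpM2l //.
apply: ler_ind01 => [/quad|]; first exact: score_remainder_bound_quadratic.
exact: score_remainder_bound.
Qed.

End score_remainder.

Lemma remainder_sum_bound {R : realType} (Il Iq Lp C3 C4 M x y e w : R) :
  0 <= Il -> 0 <= Iq -> 0 < M -> 0 <= x -> 0 <= y ->
  `|e| <= Il * (`|Lp| * x ^+ 2) ->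
  `|w| <= 2 * M * (Iq * (2 * `|C3| * x ^+ 2) + (2 * `|C3| * y * x + 2 * `|C4| * y ^+ 2)) ->
  `|e + w| <= (Il + Iq) * (`|Lp| + 4 * `|M| * (`|C3| + `|C4|)) * x ^+ 2
              + (`|Lp| + 4 * `|M| * (`|C3| + `|C4|)) * y * x
              + (`|Lp| + 4 * `|M| * (`|C3| + `|C4|)) * y ^+ 2.
Proof.
move=> Il0 Iq0 M0 x0 y0 eb wb; rewrite (gtr0_norm M0).
have := ler_normD e w; have M0' := ltW M0.
have f1 : 0 <= Il * M * `|C3| * x ^+ 2 by rewrite !mulr_ge0.
have f2 : 0 <= Il * M * `|C4| * x ^+ 2 by rewrite !mulr_ge0.
have f3 : 0 <= Iq * `|Lp| * x ^+ 2 by rewrite !mulr_ge0.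
have f4 : 0 <= Iq * M * `|C4| * x ^+ 2 by rewrite !mulr_ge0.
have f5 : 0 <= `|Lp| * y * x by rewrite !mulr_ge0.
have f6 : 0 <= M * `|C4| * y * x by rewrite !mulr_ge0.
have f7 : 0 <= `|Lp| * y ^+ 2 by rewrite !mulr_ge0.
have f8 : 0 <= M * `|C3| * y ^+ 2 by rewrite !mulr_ge0.
lra.
Qed.

Theorem theorem1 (R : realType) :
  exists Kf : R -> R -> R -> R -> R -> R -> R,
  forall (d : measure_display) (Z : measurableType d)
    (H N : normedModType R) (Hbar : completeNormedModType R) (iota : H -> Hbar)
    (rho : H -> \bar R)
    (Pm : set (probability Z R)) (P0 : probability Z R)
    (ell : N -> Z -> H -> R) (etaP : probability Z R -> N)
    (thetaP : probability Z R -> H) (m : Z -> H -> R)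
    (dpsi : H -> H -> R) (ldot : N -> H -> H -> Z -> R)
    (d2L : H -> N -> H -> H -> R) (dEta : N -> N -> H -> R)
    (Bbar : Hbar -> Hbar -> R) (dpsibar : Hbar -> R) (alpha0 : Hbar)
    (Lpsi C3 C4 kappa1 kappa2 : R),
  let L := fun (P : probability Z R) (th : H) (et : N) =>
             Rintegral P setT (fun z => ell et z th) in
  let psi0 := fun th : H => Rintegral P0 setT (fun z => m z th) in
  let dL := fun (th : H) (et : N) (h : H) => Rintegral P0 setT (ldot et th h) in
  let HP := convhull (thetaP @` Pm) in
  let NP := convhull (etaP @` Pm) in
  let theta0 := thetaP P0 in
  let eta0 := etaP P0 in
  (* setting: convex model containing P0, auxiliary norm, completion of H *)
  (forall P Q, Pm P -> Pm Q -> forall t : R, 0 <= t <= 1 ->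
     exists2 S, Pm S & forall A, measurable A ->
       S A = (t%:E * P A + (1 - t)%:E * Q A)%E) ->
  Pm P0 ->
  ext_norm rho ->
  (forall (a : R) u v, iota (a *: u + v) = a *: iota u + iota v) ->
  (forall h, `|iota h| = `|h|) ->
  closure (range iota) = setT ->
  (* (A1) + definition of theta_P *)
  (forall P, Pm P -> forall th, th <> thetaP P -> L P (thetaP P) (etaP P) < L P th (etaP P)) ->
  (* (A2) *)
  (forall th, HP th -> is_diff th psi0 (dpsi th)) ->
  (forall th th', HP th -> HP th' -> forall h,
     `|dpsi th' h - dpsi th h| <= Lpsi * `|th' - th| * `|h|) ->
  (* (A3)(i) *)
  (forall th et, HP th -> NP et ->
     [/\ forall h, measurable_fun setT (ldot et th h) /\
                   P0.-integrable setT (fun z => (ldot et th h z ^+ 2)%:E),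
         forall (a : R) h1 h2, {ae P0, forall z,
           ldot et th (a *: h1 + h2) z = a * ldot et th h1 z + ldot et th h2 z},
         exists c : R, forall h,
           Num.sqrt (Rintegral P0 setT (fun z => ldot et th h z ^+ 2)) <= c * `|h| &
         forall P, Pm P ->
           is_diff th (fun t => L P t et) (fun h => Rintegral P setT (ldot et th h))]) ->
  (* (A3)(ii) *)
  (forall et th, NP et -> HP th ->
     [/\ in_rho_dual rho (dL th et),
         rel_frechet rho HP (fun t => dL t et) th (d2L th et) &
         forall h1 h2, d2L th et h1 h2 = d2L th et h2 h1]) ->
  (* (A3)(iii) *)
  (forall th th' et et' h1 h2, HP th -> HP th' -> NP et -> NP et' ->
     (`|h1|%:E + rho h2 <= 1)%E ->
     `|d2L th' et' h1 h2 - d2L th et h1 h2| <= C3 * (`|th' - th| + `|et' - et|)) ->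
  (* (A4)(i) *)
  (forall et, NP et -> rel_frechet rho NP (fun e => dL theta0 e) et (dEta et)) ->
  (* (A4)(ii) *)
  (forall et g h, NP et -> (`|g|%:E + rho h <= 1)%E ->
     `|dEta et g h - dEta eta0 g h| <= C4 * `|et - eta0|) ->
  (* (A5) *)
  (forall g h, dEta eta0 g h = 0) ->
  (* (A6) *)
  0 < kappa1 -> 0 < kappa2 ->
  (forall h, kappa1 * `|h| ^+ 2 <= d2L theta0 eta0 h h <= kappa2 * `|h| ^+ 2) ->
  (* continuous extensions to the completion, and the Hessian Riesz representer *)
  (forall (a : R) x y z, Bbar (a *: x + y) z = a * Bbar x z + Bbar y z) ->
  (forall (a : R) x y z, Bbar z (a *: x + y) = a * Bbar z x + Bbar z y) ->
  (exists c : R, forall x y, `|Bbar x y| <= c * `|x| * `|y|) ->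
  (forall h1 h2, Bbar (iota h1) (iota h2) = d2L theta0 eta0 h1 h2) ->
  (forall (a : R) x y, dpsibar (a *: x + y) = a * dpsibar x + dpsibar y) ->
  (exists c : R, forall x, `|dpsibar x| <= c * `|x|) ->
  (forall h, dpsibar (iota h) = dpsi theta0 h) ->
  (forall x, dpsibar x = Bbar alpha0 x) ->
  (* conclusion *)
  let Ilin := ind01 (forall th, psi0 th = dpsi theta0 th) in
  let Iquad := ind01 (forall th, L P0 th eta0 - L P0 theta0 eta0 =
                  dL theta0 eta0 (th - theta0)
                  + 2^-1 * d2L theta0 eta0 (th - theta0) (th - theta0)) in
  forall M : R, let K := Kf M Lpsi C3 C4 kappa1 kappa2 in
  forall et th alpha, NP et -> HP th -> (rho alpha < M%:E)%E ->
    `|psi0 th - psi0 theta0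
      - (Rintegral P0 setT (ldot et th alpha)
         + Bbar (alpha0 - iota alpha) (iota (th - theta0)))|
    <= (Ilin + Iquad) * K * `|th - theta0| ^+ 2
       + K * `|et - eta0| * `|th - theta0|
       + K * `|et - eta0| ^+ 2.
Proof.
exists (fun M Lpsi C3 C4 _ _ => `|Lpsi| + 4 * `|M| * (`|C3| + `|C4|)).
move=> d Z H N Hbar iota rho Pm P0 ell etaP thetaP m dpsi ldot d2L dEta Bbar dpsibar alpha0
  Lpsi C3 C4 kappa1 kappa2 L psi0 dL HP NP theta0 eta0 _ Pm0 rho_norm _ _ _ A1 A2diff A2lip
  A3i A3ii A3iii A4i A4ii A5 _ _ _ BbarD _ _ Bbar_iota _ _ dpsibar_iota dpsibar_riesz
  Ilin Iquad M K et th alpha Net Hth rho_alpha.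
have HP0 : HP theta0 by apply: convhull_sub; exists P0.
have NP0 : NP eta0 by apply: convhull_sub; exists P0.
have [[dL0_lin _] [d2L0_lin _ _ _] d2L0_sym] := A3ii _ _ NP0 HP0.
have dLP th' : HP th' -> fderiv_within setT (fun y => L P0 y eta0) th' (dL th' eta0).
  by move=> Hth'; have [_ _ _ dLd] := A3i _ _ Hth' NP0; exact/is_diff_fderiv_within/dLd.
have dL0 : forall v, dL theta0 eta0 v = 0.
  apply: fderiv_eq0_at_min (dLP _ HP0) _ => y.
  by have [->|/eqP/A1 lt] := eqVneq y theta0; [|exact/ltW/lt].
have psi_rem := is_diff_lipschitz_taylor (P := forall th, psi0 th = dpsi theta0 th)
  (fun t t01 => convhull_segment HP0 Hth t01) HP0 A2diff A2lip id.
have pairing : Bbar (alpha0 - iota alpha) (iota (th - theta0))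
    = dpsi theta0 (th - theta0) - d2L theta0 eta0 (th - theta0) alpha.
  by rewrite addrC -scaleN1r BbarD Bbar_iota -dpsibar_riesz dpsibar_iota d2L0_sym; lra.
have regroup (a b c u v : R) : a - b - (v + (c - u)) = (a - b - c) + (u - v) by lra.
rewrite pairing regroup.
apply: remainder_sum_bound (ind01_ge0 _) (ind01_ge0 _) (ext_norm_lt_gt0 rho_norm rho_alpha)
  (normr_ge0 _) (normr_ge0 _) psi_rem (score_remainder_scaled (@convhull_segment _ _ _)
  (@convhull_segment _ _ _) HP0 NP0 A3ii A3iii A4i A4ii A5 dL0 rho_norm Hth Net rho_alpha _).
move=> Lquad v.
by rewrite (quadratic_fderiv dL0_lin d2L0_lin d2L0_sym Lquad (dLP _ Hth)) dL0 add0r.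
Qed.
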